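(* Let $G$ and $H$ be trees, let $\omega:(V(G)\times V(H))\cup(E(G)\times E(H))\to\mathbb{R}\cup\{-\infty\}$ be a weight function, and let $r\in V(G)$ be arbitrary. Then $\mathrm{MCS}_{\mathrm{fast}}(G^r,H)=\mathrm{MCS}(G,H)$, where $\mathrm{MCS}_{\mathrm{fast}}(G^r,H):=\max\{\mathrm{MCS}_{\mathrm{root}}(G^r_u,H^{s})\mid u\in V(G),\ s\in V(H)\}$ and $\mathrm{MCS}(G,H):=\max\{\mathrm{MCS}_{\mathrm{root}}(G^{r'},H^{s})\mid r'\in V(G),\ s\in V(H)\}$.
   Context: All graphs are simple and undirected; a tree is a connected graph with a unique path between any two vertices. An isomorphism between graphs $A,B$ is a bijection $\phi:V(A)\to V(B)$ with $uv\in E(A)\Leftrightarrow\phi(u)\phi(v)\in E(B)$. For a tree $G$ and $r\in V(G)$, $G^r$ denotes $G$ rooted at $r$; for $u\in V(G)$, the rooted subtree $G^r_u$ is the subtree of $G$ induced by $u$ and all its descendants in $G^r$, rooted at $u$. A common subtree isomorphism between trees $A$ and $B$ is an isomorphism $\varphi$ between induced subgraphs $A[X]$ and $B[Y]$ that are trees; $\operatorname{dom}(\varphi)=X$. Its weight is $W(\varphi)=\sum_{v\in X}\omega(v,\varphi(v))+\sum_{uv\in E(A[X])}\omega(uv,\varphi(u)\varphi(v))$. For rooted trees $A^a$ and $B^b$ (here subtrees of $G$ and $H$, so $\omega$ applies), $\mathrm{MCS}_{\mathrm{root}}(A^a,B^b)$ is the maximum weight of a common subtree isomorphism $\varphi$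 between $A$ and $B$ with $a\in\operatorname{dom}(\varphi)$ and $\varphi(a)=b$. Equivalently, $\mathrm{MCS}_{\mathrm{root}}(A^a,B^b)=\omega(a,b)+W(M)$, where $M$ is a maximum weight matching (possibly empty) of the complete bipartite graph on the children $C(a)$ of $a$ and $C(b)$ of $b$ with edge weights $\omega(aa',bb')+\mathrm{MCS}_{\mathrm{root}}(A^a_{a'},B^b_{b'})$. *)

From HB Require Import structures.
From mathcomp Require Import all_boot all_order all_algebra.
From mathcomp Require Import boolp reals constructive_ereal.
Set Implicit Arguments. Unset Strict Implicit. Unset Printing Implicit Defensive.
Import Order.TTheory GRing.Theory Num.Theory.

Local Open Scope ereal_scope.

Section Trees.
Variable T : finType.
Variable e : rel T.

(* p is a (vertex-)simple path from u to v in the induced subgraph on X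
   (u :: p is the vertex sequence). *)
Definition upath (X : {set T}) (u v : T) (p : seq T) : bool :=
  [&& u \in X, path e u p, all (mem X) p, uniq (u :: p) & last u p == v].

Definition tree_on (X : {set T}) : Prop :=
  forall u v, u \in X -> v \in X -> exists! p, upath X u v p.

Definition is_tree : Prop :=
  symmetric e /\ irreflexive e /\ tree_on setT.

(* vertex set of the rooted subtree G^r_u: u and its descendants in G^r,
   i.e. the vertices v whose path from r passes through u *)
Definition desc (r u : T) : {set T} :=
  [set v | `[< exists p, upath setT r v p /\ u \in r :: p >]].

Definition edges_on (X : {set T}) : {set {set T}} :=
  [set A : {set T} | [exists u, exists v,
     [&& u \in X, v \in X, e u v & A == [set u; v]]]].
End Trees.

(* Common subtree isomorphism phi between G[SA] and H[SB], with dom phi = X,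
   mapping a to b. *)
Definition rooted_csi (TG TH : finType) (eG : rel TG) (eH : rel TH)
  (SA : {set TG}) (SB : {set TH}) (a : TG) (b : TH)
  (X : {set TG}) (phi : {ffun TG -> TH}) : Prop :=
  [/\ X \subset SA, phi @: X \subset SB, tree_on eG X, tree_on eH (phi @: X)
    & [/\ {in X &, injective phi},
       (forall u v, u \in X -> v \in X -> eG u v = eH (phi u) (phi v)),
       a \in X & phi a = b]].

Definition csi_weight (R : realDomainType) (TG TH : finType) (eG : rel TG)
  (wV : TG -> TH -> \bar R) (wE : {set TG} -> {set TH} -> \bar R)
  (X : {set TG}) (phi : {ffun TG -> TH}) : \bar R :=
  (\sum_(v in X) wV v (phi v)) + (\sum_(A in edges_on eG X) wE A (phi @: A)).

Definition MCS_root (R : realDomainType) (TG TH : finType) (eG : rel TG) (eH : rel TH)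
  (wV : TG -> TH -> \bar R) (wE : {set TG} -> {set TH} -> \bar R)
  (SA : {set TG}) (a : TG) (SB : {set TH}) (b : TH) : \bar R :=
  \big[maxe/-oo]_(p : {set TG} * {ffun TG -> TH} |
                   `[< rooted_csi eG eH SA SB a b p.1 p.2 >])
     csi_weight eG wV wE p.1 p.2.

Definition MCS_fast (R : realDomainType) (TG TH : finType) (eG : rel TG) (eH : rel TH)
  (wV : TG -> TH -> \bar R) (wE : {set TG} -> {set TH} -> \bar R) (r : TG) : \bar R :=
  \big[maxe/-oo]_(u : TG) \big[maxe/-oo]_(s : TH)
     MCS_root eG eH wV wE (desc eG r u) u setT s.

Definition MCS (R : realDomainType) (TG TH : finType) (eG : rel TG) (eH : rel TH)
  (wV : TG -> TH -> \bar R) (wE : {set TG} -> {set TH} -> \bar R) : \bar R :=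
  \big[maxe/-oo]_(r' : TG) \big[maxe/-oo]_(s : TH)
     MCS_root eG eH wV wE setT r' setT s.

From HB Require Import structures.
From mathcomp Require Import all_boot all_order all_algebra.
From mathcomp Require Import boolp reals constructive_ereal.
Set Implicit Arguments. Unset Strict Implicit. Unset Printing Implicit Defensive.
Import Order.TTheory.
Local Open Scope ereal_scope.

(* Every rooted subtree G^r_u is a subtree of G, so MCS_fast <= MCS.
   Conversely, let phi be a common subtree isomorphism with domain X. Let w be
   the first vertex of X on the path of G from r to some vertex of X. Gluing
   that path prefix to the path inside X from w to any v in X gives a simple
   path from r to v through w, so X lies in G^r_w, and phi, rerooted at w,
   is counted by MCS_root(G^r_w, H^(phi w)). *)

Section TreePaths.
Variable T : finType.
Variable e : rel T.

Lemma path_prefix_first_in (X : {set T}) (r : T) (p : seq T) :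
  path e r p -> uniq (r :: p) -> last r p \in X ->
  exists q, [/\ path e r q, uniq (r :: q), last r q \in X,
     {subset r :: q <= r :: p} &
     forall z, z \in r :: q -> z \in X -> z = last r q].
Proof.
elim: p r => [|y p IHp] r /=.
  by move=> _ _ rX; exists [::]; split=> // z; rewrite inE => /eqP.
case/andP=> ery path_yp /andP [rNyp uniq_yp] lastX.
case rX: (r \in X).
  by exists [::]; split=> // [z|z]; rewrite inE => /eqP ->; rewrite ?mem_head.
have [q [path_q uniq_q lastX_q sub_q first_q]] := IHp y path_yp uniq_yp lastX.
exists (y :: q); split=> /=.
- by rewrite ery.
- by apply/andP; split=> //; apply: contra rNyp => /sub_q.
- exact: lastX_q.
- move=> z; rewrite inE => /orP [/eqP ->|/sub_q zp]; first exact: mem_head.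
  by rewrite inE zp orbT.
- by move=> z; rewrite inE => /orP [/eqP ->|/first_q//]; rewrite rX.
Qed.

Lemma tree_on_sub_desc (r : T) (X : {set T}) (x : T) :
  is_tree e -> tree_on e X -> x \in X ->
  exists2 w, w \in X & X \subset desc e r w.
Proof.
move=> [_ [_ treeT]] treeX xX.
have [p [/and5P [_ path_p _ uniq_p /eqP last_p] _]] :=
  treeT r x (in_setT _) (in_setT _).
have lastX : last r p \in X by rewrite last_p.
have [q [path_q uniq_q wX _ first_q]] :=
  path_prefix_first_in path_p uniq_p lastX.
exists (last r q) => //; apply/subsetP => v vX.
have [pv [/and5P [_ path_pv all_pv uniq_pv /eqP last_pv] _]] := treeX _ _ wX vX.
rewrite inE; apply/asboolP; exists (q ++ pv); split; last first.
  by rewrite -cat_cons mem_cat mem_last.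
apply/and5P; split=> //.
- by rewrite cat_path path_q path_pv.
- by apply/allP => ? _; rewrite /= in_setT.
- rewrite -cat_cons cat_uniq uniq_q; move: uniq_pv => /= /andP [wNpv ->].
  rewrite andbT; apply/hasPn => y ypv; apply: contraL wNpv => yq.
  by rewrite -(first_q y yq (allP all_pv y ypv)) ypv.
- by rewrite last_cat last_pv.
Qed.

End TreePaths.

Section RootedMCS.
Variables (R : realDomainType) (TG TH : finType) (eG : rel TG) (eH : rel TH).
Variables (wV : TG -> TH -> \bar R) (wE : {set TG} -> {set TH} -> \bar R).

Local Notation MCS_root := (MCS_root eG eH wV wE).

Lemma MCS_root_ge (SA : {set TG}) (SB : {set TH}) (a : TG) (b : TH)
    (X : {set TG}) (phi : {ffun TG -> TH}) :
  rooted_csi eG eH SA SB a b X phi ->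
  csi_weight eG wV wE X phi <= MCS_root SA a SB b.
Proof. by move=> csi; apply: (bigmax_sup (X, phi)) => //; apply/asboolP. Qed.

Lemma MCS_root_le (SA : {set TG}) (SB : {set TH}) (a : TG) (b : TH) (M : \bar R) :
  (forall X phi, rooted_csi eG eH SA SB a b X phi ->
     csi_weight eG wV wE X phi <= M) ->
  MCS_root SA a SB b <= M.
Proof.
move=> le_M; apply: bigmax_le => [|[X phi] /asboolP]; [exact: leNye|exact: le_M].
Qed.

Lemma rooted_csi_supp (SA SA' : {set TG}) (SB : {set TH}) (a : TG) (b : TH)
    (X : {set TG}) (phi : {ffun TG -> TH}) :
  X \subset SA' -> rooted_csi eG eH SA SB a b X phi ->
  rooted_csi eG eH SA' SB a b X phi.
Proof. by move=> XA' [*]. Qed.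

Lemma rooted_csi_reroot (SA : {set TG}) (SB : {set TH}) (a w : TG) (b : TH)
    (X : {set TG}) (phi : {ffun TG -> TH}) :
  w \in X -> rooted_csi eG eH SA SB a b X phi ->
  rooted_csi eG eH SA SB w (phi w) X phi.
Proof. by move=> wX [? ? ? ? [*]]. Qed.

End RootedMCS.

Theorem lemma2 (R : realType) (TG TH : finType) (eG : rel TG) (eH : rel TH)
  (wV : TG -> TH -> \bar R) (wE : {set TG} -> {set TH} -> \bar R) (r : TG) :
  is_tree eG -> is_tree eH ->
  (forall v x, wV v x != +oo) ->
  (forall A B, A \in edges_on eG setT -> B \in edges_on eH setT -> wE A B != +oo) ->
  MCS_fast eG eH wV wE r = MCS eG eH wV wE.
Proof.
move=> treeG _ _ _; apply/le_anti/andP; split.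
all: apply: bigmax_le => [|u _]; first exact: leNye.
all: apply: bigmax_le => [|s _]; first exact: leNye.
all: apply: MCS_root_le => X phi csi.
- apply: le_trans (le_bigmax _ _ u); apply: le_trans (le_bigmax _ _ s).
  exact: MCS_root_ge (rooted_csi_supp (subsetT _) csi).
- have [_ _ treeX _ [_ _ uX _]] := csi.
  have [w wX Xw] := tree_on_sub_desc r treeG treeX uX.
  apply: le_trans (le_bigmax _ _ w); apply: le_trans (le_bigmax _ _ (phi w)).
  exact: MCS_root_ge (rooted_csi_reroot wX (rooted_csi_supp Xw csi)).
Qed.
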